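(* Let $\varphi:\mathbb{R}^n\to\mathbb{R}$ be upper-$\mathcal{C}^2$ on $\mathbb{R}^n$. Given any $\sigma\in{]0,1[}$ and $x,w,d\in\mathbb{R}^n$ such that $w\in\partial\varphi(x)$ and $\langle w,d\rangle<0$, there exists $\eta>0$ such that $$\varphi(x + \tau d) \leq \varphi(x) + \sigma \tau \langle w,d\rangle\quad\text{for all } \tau \in{]0,\eta[}.$$
   Context: A function $\varphi:\mathbb{R}^n\to\mathbb{R}$ is upper-$\mathcal{C}^2$ on $\mathbb{R}^n$ if on some neighborhood $V$ of each $\bar x\in\mathbb{R}^n$ there is a representation $\varphi(x)=\min_{c\in C}\varphi_c(x)$, where $C$ is a compact set (in some topological space), each $\varphi_c$ is of class $\mathcal{C}^2$ on $V$, and $\varphi_c(x)$ together with its first- and second-order partial derivatives depend continuously on $(x,c)\in V\times C$. Such functions are locally Lipschitz. $\partial\varphi(x)$ denotes the Clarke subdifferential: $\partial\varphi(x)=\{v:\langle v,h\rangle\le\varphi^\circ(x;h)\ \forall h\}$ with $\varphi^\circ(x;h)=\limsup_{y\to x,\,t\to0^+}\frac{\varphi(y+th)-\varphi(y)}{t}$. *)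

(* R^n is modelled as 'rV[R]_n for R : realType. *)
From HB Require Import structures.
From mathcomp Require Import all_boot all_order all_algebra.
From mathcomp Require Import all_classical all_reals all_analysis.
Set Implicit Arguments. Unset Strict Implicit. Unset Printing Implicit Defensive.
Import Order.TTheory GRing.Theory Num.Theory.
Import numFieldNormedType.Exports.
Local Open Scope classical_set_scope.
Local Open Scope ring_scope.

Definition dotp {R : realType} {n : nat} (u v : 'rV[R]_n) : R :=
  \sum_(i < n) u 0 i * v 0 i.

Definition ebasis {R : realType} {n : nat} (i : 'I_n) : 'rV[R]_n := delta_mx 0 i.

Definition partial1 {R : realType} {n : nat} (f : 'rV[R]_n -> R) (i : 'I_n)
  (x : 'rV[R]_n) : R := 'D_(ebasis i) f x.

Definition partial2 {R : realType} {n : nat} (f : 'rV[R]_n -> R) (i j : 'I_n)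
  (x : 'rV[R]_n) : R := 'D_(ebasis j) (partial1 f i) x.

Definition C2_on {R : realType} {n : nat} (f : 'rV[R]_n -> R) (V : set 'rV[R]_n) : Prop :=
  [/\ forall x, V x -> forall i, derivable f x (ebasis i),
      forall x, V x -> forall i j, derivable (partial1 f i) x (ebasis j),
      {within V, continuous f},
      forall i, {within V, continuous (partial1 f i)} &
      forall i j, {within V, continuous (partial2 f i j)}].

Definition upper_C2 {R : realType} {n : nat} (phi : 'rV[R]_n -> R) : Prop :=
  forall xbar : 'rV[R]_n,
  exists (T : topologicalType) (C : set T) (V : set 'rV[R]_n)
         (F : T -> 'rV[R]_n -> R),
  [/\ open V, V xbar, compact C &
   [/\
      (forall x, V x -> (exists2 c, C c & phi x = F c x) /\
                        (forall c, C c -> phi x <= F c x)),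
      (forall c, C c -> C2_on (F c) V),
      {within V `*` C, continuous (fun p : 'rV[R]_n * T => F p.2 p.1)},
      (forall i, {within V `*` C,
          continuous (fun p : 'rV[R]_n * T => partial1 (F p.2) i p.1)}) &
      (forall i j, {within V `*` C,
          continuous (fun p : 'rV[R]_n * T => partial2 (F p.2) i j p.1)})]].

Definition clarke_dd {R : realType} {n : nat} (phi : 'rV[R]_n -> R)
  (x h : 'rV[R]_n) : \bar R :=
  limf_esup (fun p : 'rV[R]_n * R => ((phi (p.1 + p.2 *: h) - phi p.1) / p.2)%:E)
            (filter_prod (nbhs x) (0^'+)).

Definition clarke_subdiff {R : realType} {n : nat} (phi : 'rV[R]_n -> R)
  (x : 'rV[R]_n) : set 'rV[R]_n :=
  [set v | forall h : 'rV[R]_n, ((dotp v h)%:E <= clarke_dd phi x h)%E].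

From HB Require Import structures.
From mathcomp Require Import all_boot all_order all_algebra.
From mathcomp Require Import all_classical all_reals all_analysis.
From mathcomp Require Import ring lra.
Set Implicit Arguments. Unset Strict Implicit. Unset Printing Implicit Defensive.
Import Order.TTheory GRing.Theory Num.Theory.
Import numFieldNormedType.Exports.
Local Open Scope classical_set_scope.
Local Open Scope ring_scope.

(** Near [x], [phi] is the minimum of the pieces [F c], [c] in a compact set [C].
    If some piece active at [x] (i.e. [F c x = phi x]) satisfies
    [<grad (F c) x, d> <= <w, d>], then [phi <= F c] and the first-order
    expansion of [F c] yields the Armijo inequality for small [tau].
    Otherwise every active piece has [<grad (F c) x, -d> < <w, -d>]. Joint
    continuity of the first derivatives in [(x, c)] and compactness of [C] then
    give one slope [b < <w, -d>] bounding the difference quotients along [-d] of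
    every piece active at points near [x], hence those of [phi]; so the Clarke
    derivative of [phi] at [x] in direction [-d] is at most [b], contradicting
    [w] being a Clarke subgradient. *)

Lemma sum_lt_radius (K : realFieldType) (r k : K) : 0 < r -> 0 <= k ->
  exists2 s, 0 < s & forall a t : K, a < s -> `|t| < s -> a + `|t| * k < r.
Proof.
move=> r0 k0; have k1 : 0 < k + 1 by rewrite ltr_pwDr.
exists (r / (k + 1)) => [|a t a_s ts]; first by rewrite divr_gt0.
have -> : r = r / (k + 1) + r / (k + 1) * k by field; rewrite gt_eqF.
by rewrite ltr_leD // ler_wpM2r // ltW.
Qed.

Lemma open_nbhs_line (K : realFieldType) (E : normedModType K) (V : set E) (x h : E) :
  open V -> V x ->
  exists2 r, 0 < r & forall y t, `|y - x| < r -> `|t| < r -> V (y + t *: h).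
Proof.
move=> oV Vx; have /nbhs_ballP [rV /= rV0 ballV] : nbhs x V.
  exact: open_nbhs_nbhs.
have [r r0 small] := sum_lt_radius rV0 (normr_ge0 h).
exists r => // y t yx tr; apply: ballV; rewrite -ball_normE /= distrC.
rewrite addrAC; apply: le_lt_trans (ler_normD _ _) _.
by rewrite normrZ; exact: small.
Qed.

Section Increments.
Variables (R : realType) (n : nat).
Implicit Types (f : 'rV[R]_n -> R) (p e x y z h : 'rV[R]_n).

Definition grad f x : 'rV[R]_n := \row_i partial1 f i x.

Lemma dotpN (u v : 'rV[R]_n) : dotp u (- v) = - dotp u v.
Proof. by rewrite /dotp -sumrN; apply: eq_bigr => i _; rewrite mxE mulrN. Qed.

Lemma normr_ebasis_le1 (i : 'I_n) : `|ebasis i : 'rV[R]_n| <= 1.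
Proof.
rewrite /Num.Def.normr /= mx_normrE; apply: bigmax_le => // -[a b] _ /=.
by rewrite /ebasis mxE; case: (_ && _); rewrite ?normr1 ?normr0.
Qed.

Lemma derive_line f p e (c : R) :
  derivable (fun s : R => f (p + s *: e)) c 1 = derivable f (p + c *: e) e /\
  'D_1 (fun s : R => f (p + s *: e)) c = 'D_e f (p + c *: e).
Proof.
have quotient_eq :
    (fun h : R => h^-1 *: (((fun s : R => f (p + s *: e)) \o shift c) (h *: 1)
                           - f (p + c *: e)))
  = (fun h : R => h^-1 *: ((f \o shift (p + c *: e)) (h *: e) - f (p + c *: e))).
  apply: funext => h /=; rewrite /shift /=.
  by rewrite -[h%:A]/(h * 1) mulr1 scalerDl addrCA.
by rewrite /derivable /derive /= quotient_eq.
Qed.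

Lemma MVT_bound (g : R -> R) (a b L eps : R) : a <= b ->
  (forall s, a <= s <= b -> derivable g s 1 /\ `|'D_1 g s - L| <= eps) ->
  `|g b - g a - (b - a) * L| <= eps * (b - a).
Proof.
move=> ab dg.
have [c cab ->] : exists2 c, c \in `[a, b] & g b - g a = 'D_1 g c * (b - a).
  apply: MVT_segment => //.
    move=> s; rewrite in_itv /= => /andP[a_s sb]; apply: derivableP.
    by have /dg[] : a <= s <= b by rewrite !ltW.
  by apply: derivable_within_continuous => s; rewrite in_itv /= => /dg[].
rewrite [(b - a) * L]mulrC -mulrBl normrM (ger0_norm (x := b - a)) ?subr_ge0 //.
apply: ler_wpM2r; first by rewrite subr_ge0.
by move: cab; rewrite in_itv /= => /dg[].
Qed.

Lemma line_increment_bound f p e (s0 L eps : R) :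
  (forall s, `|s| <= `|s0| ->
     derivable f (p + s *: e) e /\ `|'D_e f (p + s *: e) - L| <= eps) ->
  `|f (p + s0 *: e) - f p - s0 * L| <= eps * `|s0|.
Proof.
move=> df; pose g s := f (p + s *: e).
have dg s : `|s| <= `|s0| -> derivable g s 1 /\ `|'D_1 g s - L| <= eps.
  by move=> /df; case: (derive_line f p e s) => -> ->.
have g0 : g 0 = f p by rewrite /g scale0r addr0.
have [s0_ge0|s0_lt0] := leP 0 s0.
  have := MVT_bound (L := L) (eps := eps) s0_ge0 (g := g).
  rewrite g0 subr0 (ger0_norm s0_ge0); apply => s /andP[s_ge0 s_le]; apply: dg.
  by rewrite !ger0_norm ?(le_trans s_ge0).
have := MVT_bound (L := L) (eps := eps) (ltW s0_lt0) (g := g).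
rewrite g0 sub0r (ltr0_norm s0_lt0) => bound.
have -> : f (p + s0 *: e) - f p - s0 * L = - (f p - g s0 - - s0 * L) by rewrite /g; ring.
rewrite normrN; apply: bound => s /andP[s_ge s_le0]; apply: dg.
by rewrite (ler0_norm s_le0) (ltr0_norm s0_lt0) lerN2.
Qed.

(* Walk from [z] to [z + t h] one coordinate direction at a time, applying the
   mean value theorem on each segment. *)
Lemma increment_bound_seq f x0 (D : 'rV[R]_n) (r eps t : R) h :
  (forall y, `|y - x0| < r -> forall i,
     derivable f y (ebasis i) /\ `|partial1 f i y - D 0 i| <= eps) ->
  forall (l : seq 'I_n) z, `|z - x0| + `|t| * \sum_(i <- l) `|h 0 i| < r ->
  `|f (z + t *: \sum_(i <- l) h 0 i *: ebasis i) - f z - t * \sum_(i <- l) D 0 i * h 0 i|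
    <= eps * (`|t| * \sum_(i <- l) `|h 0 i|).
Proof.
move=> df; elim=> [|o l IH] z; rewrite ?big_nil ?big_cons => zr.
  by rewrite scaler0 addr0 subrr mulr0 sub0r normrN normr0 !mulr0.
set S := \sum_(i <- l) `|h 0 i|.
have step s : `|z + s *: ebasis o - x0| <= `|z - x0| + `|s|.
  rewrite addrAC; apply: le_trans (ler_normD _ _) _.
  by rewrite lerD2l normrZ ler_piMr ?normr_ebasis_le1.
set z' := z + (t * h 0 o) *: ebasis o.
have -> : z + t *: (h 0 o *: ebasis o + \sum_(i <- l) h 0 i *: ebasis i)
          = z' + t *: \sum_(i <- l) h 0 i *: ebasis i by rewrite scalerDr scalerA addrA.
have -> : f (z' + t *: \sum_(i <- l) h 0 i *: ebasis i) - f z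
            - t * (D 0 o * h 0 o + \sum_(i <- l) D 0 i * h 0 i)
          = (f (z' + t *: \sum_(i <- l) h 0 i *: ebasis i) - f z'
               - t * \sum_(i <- l) D 0 i * h 0 i)
            + (f z' - f z - (t * h 0 o) * D 0 o) by ring.
have -> : eps * (`|t| * (`|h 0 o| + S)) = eps * (`|t| * S) + eps * `|t * h 0 o|.
  by rewrite normrM; ring.
apply: le_trans (ler_normD _ _) _; apply: lerD.
  apply: IH; apply: le_lt_trans zr.
  by rewrite mulrDr addrA lerD2r -normrM step.
apply: line_increment_bound => s s_le; apply: df.
apply: le_lt_trans (step s) _; apply: le_lt_trans zr.
rewrite mulrDr lerD2l -normrM; apply: le_trans s_le _.
by rewrite lerDl mulr_ge0 // sumr_ge0.
Qed.

Lemma increment_bound f x0 (D : 'rV[R]_n) (r eps t : R) z h :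
  (forall y, `|y - x0| < r -> forall i,
     derivable f y (ebasis i) /\ `|partial1 f i y - D 0 i| <= eps) ->
  `|z - x0| + `|t| * \sum_i `|h 0 i| < r ->
  `|f (z + t *: h) - f z - t * dotp D h| <= eps * (`|t| * \sum_i `|h 0 i|).
Proof.
move=> df zr.
have h_sum : \sum_(i <- index_enum 'I_n) h 0 i *: ebasis i = h := esym (row_sum_delta h).
by have := increment_bound_seq df zr; rewrite h_sum.
Qed.

End Increments.

Lemma near_right_box (K : realFieldType) (E : normedModType K) (x : E) (r : K) :
  0 < r -> \forall p \near filter_prod (nbhs x) (0 : K)^'+, `|p.1 - x| < r /\ 0 < p.2 < r.
Proof.
move=> r0; exists ([set y | `|y - x| < r], [set t : K | 0 < t < r]) => [|[y t] []//].
split; first by apply/nbhs_ballP; exists r => //= y; rewrite -ball_normE /= distrC.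
near=> t; apply/andP; split; near: t; [exact: nbhs_right_gt | exact: nbhs_right_lt].
Unshelve. all: end_near.
Qed.

Lemma clarke_dd_le (R : realType) (n : nat) (phi : 'rV[R]_n -> R) (x h : 'rV[R]_n)
    (b : R) :
  (\forall p \near filter_prod (nbhs x) (0 : R)^'+,
     phi (p.1 + p.2 *: h) - phi p.1 <= p.2 * b) ->
  (clarke_dd phi x h <= b%:E)%E.
Proof.
move=> near_b.
set U := [set p : 'rV[R]_n * R | phi (p.1 + p.2 *: h) - phi p.1 <= p.2 * b /\ 0 < p.2].
have FU : filter_prod (nbhs x) (0 : R)^'+ U.
  apply: filterI near_b _; exists (setT, [set t : R | 0 < t]) => [|[y t] []//].
  by split; [exact: filterT | exact: nbhs_right_gt].
pose quotient (p : 'rV[R]_n * R) := ((phi (p.1 + p.2 *: h) - phi p.1) / p.2)%:E.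
apply: (@le_trans _ _ (ereal_sup (quotient @` U))).
  by apply: ereal_inf_lbound; exists U.
apply: ge_ereal_sup => _ [[y t] [bound t0] <-] /=.
by rewrite lee_fin ler_pdivrMr // mulrC.
Qed.

Section MinRepresentation.
Variables (R : realType) (n : nat) (T : topologicalType).
Variables (phi : 'rV[R]_n -> R) (C : set T) (V : set 'rV[R]_n) (F : T -> 'rV[R]_n -> R).
Hypothesis openV : open V.
Hypothesis phi_min : forall y, V y ->
  (exists2 c, C c & phi y = F c y) /\ (forall c, C c -> phi y <= F c y).
Hypothesis F_C2 : forall c, C c -> C2_on (F c) V.
Hypothesis F_cont : {within V `*` C, continuous (fun p : 'rV[R]_n * T => F p.2 p.1)}.
Hypothesis dF_cont : forall i, {within V `*` C,
  continuous (fun p : 'rV[R]_n * T => partial1 (F p.2) i p.1)}.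

Lemma partials_near_uniformly x0 c0 (eps : R) : V x0 -> C c0 -> 0 < eps ->
  exists2 W, nbhs c0 W & exists2 r, 0 < r & forall c y, W c -> C c -> `|y - x0| < r ->
    V y /\ forall i, `|partial1 (F c) i y - partial1 (F c0) i x0| <= eps.
Proof.
move=> Vx0 Cc0 eps0.
have near_i i : \forall p \near (x0, c0), V p.1 -> C p.2 ->
    `|partial1 (F c0) i x0 - partial1 (F p.2) i p.1| < eps.
  move: (@dF_cont i) => /subspace_continuousP /(_ (x0, c0) (conj Vx0 Cc0)).
  move=> /cvgrPdist_lt /(_ eps eps0).
  rewrite near_withinE; apply: filterS => -[y c] close Vy Cc; exact: close.
have near_V : \forall p \near (x0, c0), V p.1.
  exists (V, setT) => [|[y c] []//].
  by split; [exact: open_nbhs_nbhs | exact: filterT].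
have [[A W] /= [nA nW] sAW] := filterI (filter_forall _ near_i) near_V.
have /nbhs_ballP [r /= r0 ballA] := nA.
exists W => //; exists r => // c y Wc Cc yr.
have Ay : A y by apply: ballA; rewrite -ball_normE /= distrC.
have [close Vy] := sAW (y, c) (conj Ay Wc).
by split=> // i; rewrite distrC ltW // close.
Qed.

Lemma uniform_expansion x0 c0 h (eps : R) : V x0 -> C c0 -> 0 < eps ->
  exists2 W, nbhs c0 W & exists2 r, 0 < r & forall c z t, W c -> C c ->
    `|z - x0| < r -> `|t| < r ->
    `|F c (z + t *: h) - F c z - t * dotp (grad (F c0) x0) h| <= eps * `|t|.
Proof.
move=> Vx0 Cc0 eps0; set k := \sum_i `|h 0 i|.
have k0 : 0 <= k by apply: sumr_ge0.
have k1 : 0 < k + 1 by rewrite ltr_pwDr.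
have eps'0 : 0 < eps / (k + 1) by rewrite divr_gt0.
have [W nW [r1 r10 close]] := partials_near_uniformly Vx0 Cc0 eps'0.
have [r r0 small] := sum_lt_radius r10 k0.
exists W => //; exists r => // c z t Wc Cc zr tr.
have df y : `|y - x0| < r1 -> forall i, derivable (F c) y (ebasis i) /\
    `|partial1 (F c) i y - grad (F c0) x0 0 i| <= eps / (k + 1).
  move=> yr i; have [Vy dclose] := close c y Wc Cc yr.
  by have [dF _ _ _ _] := F_C2 Cc; rewrite mxE; split; [exact: dF | exact: dclose].
apply: le_trans (increment_bound df (small _ _ zr tr)) _.
have -> : eps / (k + 1) * (`|t| * k) = eps * `|t| * (k / (k + 1)) by ring.
by rewrite ler_piMr ?mulr_ge0 ?(ltW eps0) // ler_pdivrMr // mul1r lerDl.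
Qed.

Lemma active_descent x0 c0 d (s : R) : V x0 -> C c0 -> phi x0 = F c0 x0 ->
  dotp (grad (F c0) x0) d < s ->
  exists2 eta, 0 < eta &
    forall tau, 0 < tau < eta -> phi (x0 + tau *: d) <= phi x0 + tau * s.
Proof.
move=> Vx0 Cc0 active slope; rewrite -subr_gt0 in slope.
have [W nW [r r0 expand]] := uniform_expansion d Vx0 Cc0 slope.
have [rV rV0 line] := open_nbhs_line d openV Vx0.
exists (Num.min r rV) => [|tau]; first by rewrite lt_min r0 rV0.
move=> /andP[tau0]; rewrite lt_min => /andP[tau_r tau_rV].
have Vx0_tau : V (x0 + tau *: d) by apply: line; rewrite ?subrr ?normr0 ?gtr0_norm.
apply: le_trans ((phi_min Vx0_tau).2 c0 Cc0) _.
have := expand c0 x0 tau (nbhs_singleton nW) Cc0.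
rewrite subrr normr0 gtr0_norm // active => /(_ r0 tau_r) /(le_trans (ler_norm _)).
nra.
Qed.

Lemma inactive_piece_near x0 c : V x0 -> C c -> phi x0 < F c x0 ->
  exists2 W, nbhs c W & exists2 r, 0 < r & forall c' y, W c' -> C c' ->
    `|y - x0| < r -> V y -> phi y < F c' y.
Proof.
move=> Vx0 Cc gap; set g := (F c x0 - phi x0) / 2.
have g0 : 0 < g by rewrite divr_gt0 // subr_gt0.
have [[c1 Cc1 active1] _] := phi_min Vx0.
have near_c1 : \forall y \near x0, V y -> `|F c1 x0 - F c1 y| < g.
  have [_ _ cont1 _ _] := F_C2 Cc1.
  move/subspace_continuousP: cont1 => /(_ x0 Vx0) /cvgrPdist_lt /(_ g g0).
  by rewrite near_withinE.
have near_c : \forall p \near (x0, c), V p.1 -> C p.2 -> `|F c x0 - F p.2 p.1| < g.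
  move/subspace_continuousP: F_cont => /(_ (x0, c) (conj Vx0 Cc)).
  move=> /cvgrPdist_lt /(_ g g0).
  rewrite near_withinE; apply: filterS => -[y c'] close Vy Cc'; exact: close.
have [[A W] /= [nA nW] sAW] := near_c.
have /nbhs_ballP [r /= r0 ballA] :
    nbhs x0 (A `&` (fun y => V y -> `|F c1 x0 - F c1 y| < g)) by apply: filterI.
exists W => //; exists r => // c' y Wc' Cc' yr Vy.
have x0y : ball x0 r y by rewrite -ball_normE /= distrC.
have [Ay near_c1_y] := ballA y x0y.
have := sAW (y, c') (conj Ay Wc') Vy Cc'; rewrite ltr_norml => /andP[_ low].
have := near_c1_y Vy; rewrite ltr_norml => /andP[up _].
have := (phi_min Vy).2 c1 Cc1; rewrite /g in low up *; lra.
Qed.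

Lemma piece_slope_bound x0 h (a : R) c : V x0 -> C c ->
  (phi x0 = F c x0 -> dotp (grad (F c) x0) h < a) ->
  exists2 W, nbhs c W & exists2 b0, b0 < a & exists2 r, 0 < r &
    forall c' y t b, W c' -> C c' -> `|y - x0| < r -> 0 < t < r -> b0 < b ->
      V y -> phi y = F c' y -> F c' (y + t *: h) - F c' y <= t * b.
Proof.
move=> Vx0 Cc slope; have [active|inactive] := pselect (phi x0 = F c x0).
  set D := dotp (grad (F c) x0) h; have Da : D < a := slope active.
  have eps0 : 0 < (a - D) / 2 by rewrite divr_gt0 // subr_gt0.
  have [W nW [r r0 expand]] := uniform_expansion h Vx0 Cc eps0.
  exists W => //; exists ((a + D) / 2); first lra.
  exists r => // c' y t b Wc' Cc' yr /andP[t0 tr] b0b _ _.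
  have := expand c' y t Wc' Cc' yr.
  rewrite gtr0_norm // => /(_ tr) /(le_trans (ler_norm _)).
  have : t * ((a + D) / 2) <= t * b by rewrite ler_wpM2l // ltW.
  rewrite -/D; nra.
have gap : phi x0 < F c x0 by rewrite lt_neqAle (phi_min Vx0).2 // andbT; apply/eqP.
have [W nW [r r0 never_active]] := inactive_piece_near Vx0 Cc gap.
exists W => //; exists (a - 1); first lra.
exists r => // c' y t b Wc' Cc' yr _ _ Vy active.
by have := never_active c' y Wc' Cc' yr Vy; rewrite active ltxx.
Qed.

Lemma clarke_dd_lt_of_active x0 h (a : R) : compact C -> V x0 ->
  (forall c, C c -> phi x0 = F c x0 -> dotp (grad (F c) x0) h < a) ->
  (clarke_dd phi x0 h < a%:E)%E.
Proof.
move=> compactC Vx0 slope.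
(* Carrying the slope [b] in a left neighbourhood of [a] lets compactness of [C]
   also produce a single slope [b < a] valid for all pieces. *)
pose G := filter_prod (a^'-) (filter_prod (nbhs x0) (0 : R)^'+).
pose P (i : R * ('rV[R]_n * R)) c := V i.2.1 -> phi i.2.1 = F c i.2.1 ->
  F c (i.2.1 + i.2.2 *: h) - F c i.2.1 <= i.2.2 * i.1.
have cover c : C c -> \forall c' \near c & i \near G, C c' -> P i c'.
  move=> Cc; have [W nW [b0 b0a [r r0 bound]]] := piece_slope_bound Vx0 Cc (slope c Cc).
  exists (W, [set i | b0 < i.1 /\ `|i.2.1 - x0| < r /\ 0 < i.2.2 < r]).
    split => //; exists ([set b | b0 < b], [set p | `|p.1 - x0| < r /\ 0 < p.2 < r]).
      by split; [exact: nbhs_left_gt | exact: near_right_box].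
    by move=> [b p] [].
  by move=> [c' [b [y t]]] /= [Wc' [b0b [yr tr]]] Cc'; apply: bound.
have [[B1 B2] /= [nB1 nB2] uniform] :=
  (near_covering_withinP C).2 ((compact_near_coveringP C).1 compactC) _ G P _ cover.
have /filter_ex [b [B1b ba]] : (a^'-) (B1 `&` [set b | b < a]).
  by apply: filterI => //; exact: nbhs_left_lt.
apply: (@le_lt_trans _ _ b%:E); last by rewrite lte_fin.
have [rV rV0 line] := open_nbhs_line h openV Vx0.
apply: clarke_dd_le; apply: filterS (filterI nB2 (near_right_box x0 rV0)).
move=> [y t] [B2yt [yr /andP[t0 tr]]] /=.
have Vy : V y by have := line y 0 yr; rewrite normr0 scale0r addr0; apply.
have Vyt : V (y + t *: h) by apply: line; rewrite ?gtr0_norm.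
have [[cy Ccy active] _] := phi_min Vy.
have := uniform (b, (y, t)) (conj B1b B2yt) cy Ccy Vy active.
have := (phi_min Vyt).2 cy Ccy; rewrite /= active; lra.
Qed.

End MinRepresentation.

Theorem proposition4p3 (R : realType) (n : nat) (phi : 'rV[R]_n -> R)
  (Hphi : upper_C2 phi) (sigma : R) (Hsigma : 0 < sigma < 1)
  (x w d : 'rV[R]_n) (Hw : clarke_subdiff phi x w) (Hwd : dotp w d < 0) :
  exists2 eta : R, 0 < eta &
    forall tau : R, 0 < tau < eta ->
      phi (x + tau *: d) <= phi x + sigma * tau * dotp w d.
Proof.
have [T [C [V [F [openV Vx compactC [phi_min F_C2 F_cont dF_cont _]]]]]] := Hphi x.
have [[c0 [Cc0 active0 steep0]]|no_steep] := pselect (exists c0,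
    [/\ C c0, phi x = F c0 x & dotp (grad (F c0) x) d <= dotp w d]).
  have slope0 : dotp (grad (F c0) x) d < sigma * dotp w d.
    by move: Hsigma => /andP[_ sigma1]; nra.
  have [eta eta0 descent] :=
    active_descent openV phi_min F_C2 dF_cont Vx Cc0 active0 slope0.
  by exists eta => // tau /descent; rewrite mulrCA mulrA.
have flat c : C c -> phi x = F c x -> dotp (grad (F c) x) (- d) < dotp w (- d).
  move=> Cc active; rewrite !dotpN ltrN2 ltNge; apply/negP => steep.
  by apply: no_steep; exists c.
have := clarke_dd_lt_of_active openV phi_min F_C2 F_cont dF_cont compactC Vx flat.
by move=> /(le_lt_trans (Hw (- d))); rewrite ltxx.
Qed.
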